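(* Let $\mathbf{a}\in\mathbb{R}^n\setminus\{0\}$, $b\in\mathbb{R}$, $R,N\in\mathbb{N}$, let $\mathbf{a}'$ be a Diophantine approximation of $\mathbf{a}$ of precision $N$, and let $\alpha:=\|\mathbf{a}\|_\infty/\|\mathbf{a}'\|_\infty$. Then: (i) For every $b'\in\mathbb{R}$: $\mathbf{a}'\mathbf{x}\le b'\Rightarrow_R \mathbf{a}\mathbf{x}\le\alpha(b'+R/N)$, and $\mathbf{a}'\mathbf{x}\ge b'\Rightarrow_R\mathbf{a}\mathbf{x}\ge\alpha(b'-R/N)$. (ii) Suppose $R/N<1/4$ and $\alpha\ge2$. Then exactly one of the following two cases holds, and in each case the integer $b'$ described is unique: (non-dominating case) $-R\|\mathbf{a}\|_\infty-1<b<R\|\mathbf{a}\|_\infty$ and there is a unique $b'\in\mathbb{Z}$ with $|b'|\le R\|\mathbf{a}'\|_\infty$ such that $(b,b+1)\cap[\alpha(b'-R/N),\alpha(b'+R/N)]\ne\emptyset$; (dominating case) either there is a unique $b'\in\mathbb{Z}$ with $-R\|\mathbf{a}'\|_\infty\le b'\le R\|\mathbf{a}'\|_\infty-1$ such that $(b,b+1)\subseteq(\alpha(b'+R/N),\alpha(b'+1-R/N))$; or $b\ge R\|\mathbf{a}\|_\infty$ and $b'=R\|\mathbf{a}'\|_\infty$; or $b+1\le-R\|\mathbf{a}\|_\infty$ and $b'=-R\|\mathbf{a}'\|_\infty-1$. Furthermore, in the dominating case, $\mathbf{a}'\mathbf{x}\le b'\Rightarrow_R\mathbf{a}\mathbf{x}\le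 b$ and $\mathbf{a}'\mathbf{x}\ge b'+1\Rightarrow_R\mathbf{a}\mathbf{x}\ge b+1$.
   Context: For $\mathbf{a}\in\mathbb{R}^n\setminus\{0\}$ and integer $N\ge1$, $\mathbf{a}'\in\mathbb{Z}^n$ is a Diophantine approximation of $\mathbf{a}$ of precision $N$ if $\mathbf{a}'=\lfloor l\,\mathbf{a}/\|\mathbf{a}\|_\infty\rceil$ (coordinatewise rounding to nearest integer) for some integer $1\le l\le N^n$ with $\|l\,\mathbf{a}/\|\mathbf{a}\|_\infty-\mathbf{a}'\|_\infty<1/N$ and $\|\mathbf{a}'\|_\infty=l$. For a system $\mathsf{A}\mathbf{x}\le\mathbf{b}$ (possibly including equalities), $\mathbf{c}\in\mathbb{R}^n$, $d\in\mathbb{R}$ and $R\in\mathbb{N}$, the notation $\mathsf{A}\mathbf{x}\le\mathbf{b}\Rightarrow_R\mathbf{c}\mathbf{x}\le d$ means $\{\mathbf{x}\in\mathbb{R}^n:\|\mathbf{x}\|_1\le R,\ \mathsf{A}\mathbf{x}\le\mathbf{b}\}\subseteq\{\mathbf{x}\in\mathbb{R}^n:\|\mathbf{x}\|_1\le R,\ \mathbf{c}\mathbf{x}\le d\}$. *)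

From mathcomp Require Import all_boot all_order all_algebra.
From mathcomp Require Import reals.
Set Implicit Arguments. Unset Strict Implicit. Unset Printing Implicit Defensive.
Import Order.TTheory GRing.Theory Num.Theory.
Local Open Scope ring_scope.

Definition infnorm (T : realDomainType) (n : nat) (v : 'I_n -> T) : T :=
  \big[Num.max/0]_(i < n) `|v i|.

Definition onenorm (T : realDomainType) (n : nat) (v : 'I_n -> T) : T :=
  \sum_(i < n) `|v i|.

Definition dotv (R : realType) (n : nat) (c x : 'I_n -> R) : R :=
  \sum_(i < n) c i * x i.

Definition intvec (R : realType) (n : nat) (v : 'I_n -> int) : 'I_n -> R :=
  fun i => (v i)%:~R.

Definition round (R : realType) (x : R) : int := Num.floor (x + 2^-1).

Definition dioph_approx (R : realType) (n : nat) (a : 'I_n -> R)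
    (N : nat) (a' : 'I_n -> int) : Prop :=
  (1 <= N)%N /\
  exists l : nat,
    [/\ (1 <= l <= N ^ n)%N,
        (forall i, a' i = round (l%:R * a i / infnorm a)),
        infnorm (fun i => l%:R * a i / infnorm a - (a' i)%:~R) < N%:R^-1
      & infnorm a' = l%:Z].

Definition implies_R (R : realType) (n : nat) (r : nat)
    (P Q : ('I_n -> R) -> Prop) : Prop :=
  forall x : 'I_n -> R, onenorm x <= r%:R -> P x -> Q x.

Definition alpha (R : realType) (n : nat) (a : 'I_n -> R) (a' : 'I_n -> int) : R :=
  infnorm a / (infnorm a')%:~R.

Definition nondominating (R : realType) (n : nat) (a : 'I_n -> R)
    (a' : 'I_n -> int) (b : R) (r N : nat) : Prop :=
  let al := alpha a a' in
  - r%:R * infnorm a - 1 < b < r%:R * infnorm a /\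
  exists! b' : int,
    `|b'| <= r%:Z * infnorm a' /\
    exists y : R, b < y < b + 1 /\
      al * (b'%:~R - r%:R / N%:R) <= y <= al * (b'%:~R + r%:R / N%:R).

Definition dominating_with (R : realType) (n : nat) (a : 'I_n -> R)
    (a' : 'I_n -> int) (b : R) (r N : nat) (b' : int) : Prop :=
  let al := alpha a a' in
  [\/ (- (r%:Z * infnorm a') <= b' <= r%:Z * infnorm a' - 1) /\
        (forall y : R, b < y < b + 1 ->
           al * (b'%:~R + r%:R / N%:R) < y < al * (b'%:~R + 1 - r%:R / N%:R)),
      r%:R * infnorm a <= b /\ b' = r%:Z * infnorm a'
    | b + 1 <= - (r%:R * infnorm a) /\ b' = - (r%:Z * infnorm a') - 1].

Definition dominating (R : realType) (n : nat) (a : 'I_n -> R)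
    (a' : 'I_n -> int) (b : R) (r N : nat) : Prop :=
  exists! b' : int, dominating_with a a' b r N b'.

From mathcomp Require Import all_boot all_order all_algebra reals.
From mathcomp Require Import zify ring lra.
From Stdlib Require Import FunctionalExtensionality.
Import Order.TTheory GRing.Theory Num.Theory.
Set Implicit Arguments. Unset Strict Implicit.
Local Open Scope ring_scope.

(* Write A = ||a||_inf, l = ||a'||_inf and alpha = A / l.  The defining error
   bound of the approximation says that every coordinate of a - alpha a' is at
   most alpha / N in absolute value; hence on the ball ||x||_1 <= r we get
   |a x - alpha a' x| <= alpha r / N, while |a' x| <= r l and |a x| <= r A.
   Part (i) is immediate from this.

   Part (ii) is a one-dimensional statement about the lattice alpha Z: around
   each point node k = alpha k put the interval of radius p = alpha r / N.  If
   alpha >= 2 and r / N < 1/4, consecutive intervals are at least one unit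
   apart, so a unit window (b, b + 1) inside the range [- alpha L, alpha L],
   L = r l, meets exactly one of them or lies in exactly one gap; outside the
   range it is dominated by an end of the lattice. *)

Lemma window_meets_interval (R : realFieldType) (b c e : R) :
  c <= e -> c - 1 < b < e -> exists y, b < y < b + 1 /\ c <= y <= e.
Proof.
move=> ce /andP[cb be].
have [bc|cb'] := ltrP b c; have [eb|be'] := lerP (b + 1) e.
- by exists ((c + b + 1) / 2); lra.
- by exists c; lra.
- by exists (b + 2^-1); lra.
- by exists ((b + e) / 2); lra.
Qed.

Lemma window_inside (R : realFieldType) (b c e : R) :
  (forall y, b < y < b + 1 -> c < y < e) <-> c <= b /\ b + 1 <= e.
Proof.
split=> [inside|[cb be] y /andP[y1 y2]]; last by apply/andP; split; lra.
have in_window y : b < y < b + 1 -> c < y /\ y < e.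
  by move=> /inside /andP.
split; rewrite leNgt; apply/negP => out.
- have [cb1|cb1] := lerP c (b + 1).
    by have [] := in_window ((b + c) / 2); lra.
  by have [] := in_window (b + 2^-1); lra.
- have [be'|be'] := lerP b e.
    by have [] := in_window ((b + 1 + e) / 2); lra.
  by have [] := in_window (b + 2^-1); lra.
Qed.

Lemma unique_iff (T : Type) (P Q : T -> Prop) :
  (forall x, P x <-> Q x) -> (exists! x, P x) <-> (exists! x, Q x).
Proof.
move=> PQ; split=> -[x [Px uniq]]; exists x.
- by split; [apply/PQ | move=> y /PQ; apply: uniq].
- by split; [apply/PQ | move=> y /PQ; apply: uniq].
Qed.

Section Lattice.
Variables (R : archiFieldType) (al p : R).

Definition node (k : int) : R := al * k%:~R.

Lemma node_add1 (k : int) : node (k + 1) = node k + al.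
Proof. by rewrite /node intrD mulrDr mulr1. Qed.

Lemma nodeN (k : int) : node (- k) = - node k.
Proof. by rewrite /node intrN mulrN. Qed.

Lemma node_le (al_gt0 : 0 < al) (j k : int) : j <= k -> node j <= node k.
Proof. by move=> jk; rewrite /node ler_wpM2l ?ler_int // ltW. Qed.

Lemma node_lt (al_gt0 : 0 < al) (j k : int) : j < k -> node j + al <= node k.
Proof. by move=> jk; rewrite -node_add1 node_le //; lia. Qed.

Lemma node_ge0 (al_gt0 : 0 < al) (k : int) : 0 <= k -> 0 <= node k.
Proof. by move=> k0; rewrite /node mulr_ge0 ?ler0z // ltW. Qed.

Definition meets (b : R) (k : int) : Prop :=
  exists y, b < y < b + 1 /\ node k - p <= y <= node k + p.

Definition in_gap (b : R) (k : int) : Prop :=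
  node k + p <= b /\ b + 1 <= node k + al - p.

Lemma in_gap_not_meets (al_gt0 : 0 < al) (b : R) (j k : int) :
  in_gap b k -> ~ meets b j.
Proof.
move=> [gk1 gk2] [y [/andP[y1 y2] /andP[y3 y4]]].
have [jk|kj] := lerP j k; first by have := node_le al_gt0 jk; lra.
by have := node_lt al_gt0 kj; lra.
Qed.

Lemma meets_unique (al_gt0 : 0 < al) (gap_wide : 1 <= al - 2 * p) (b : R) (j k : int) :
  meets b j -> meets b k -> j = k.
Proof.
move=> [y [/andP[y1 y2] /andP[y3 y4]]] [z [/andP[z1 z2] /andP[z3 z4]]].
by case: (ltrgtP j k) => // [/(node_lt al_gt0)|/(node_lt al_gt0)] gap; exfalso; lra.
Qed.

Lemma in_gap_unique (al_gt0 : 0 < al) (p_ge0 : 0 <= p) (b : R) (j k : int) :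
  in_gap b j -> in_gap b k -> j = k.
Proof.
move=> [gj1 gj2] [gk1 gk2].
by case: (ltrgtP j k) => // [/(node_lt al_gt0)|/(node_lt al_gt0)] gap; exfalso; lra.
Qed.

Lemma node_floor (al_gt0 : 0 < al) (L : int) (y : R) :
  - node L <= y <= node L -> exists2 k : int, - L <= k <= L & node k <= y < node k + al.
Proof.
move=> /andP[yL1 yL2]; set k := Num.floor (y / al).
have k_le : node k <= y by rewrite /node mulrC -ler_pdivlMr // floor_le.
have k_gt : y < node k + al.
  by rewrite -node_add1 /node mulrC -ltr_pdivrMr // floorD1_gt.
exists k; last by rewrite k_le k_gt.
rewrite -nodeN in yL1; apply/andP; split; rewrite leNgt; apply/negP.
- by move=> /(node_lt al_gt0); lra.
- by move=> /(node_lt al_gt0); lra.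
Qed.

Lemma window_cell (p_ge0 : 0 <= p) (b y : R) (k : int) :
  b < y < b + 1 -> node k <= y <= node k + al ->
  [\/ meets b k, meets b (k + 1) | in_gap b k].
Proof.
move=> /andP[y1 y2] /andP[yk1 yk2].
have meets_k z : b < z < b + 1 -> node k - p <= z <= node k + p -> meets b k.
  by move=> zb zk; exists z.
have meets_k1 z : b < z < b + 1 -> node k + al - p <= z <= node k + al + p ->
    meets b (k + 1).
  by move=> zb zk; exists z; rewrite node_add1.
have [ylo|ylo] := lerP y (node k + p); first by apply: Or31; apply: (meets_k y); lra.
have [yhi|yhi] := lerP (node k + al - p) y.
  by apply: Or32; apply: (meets_k1 y); lra.
have [blo|blo] := ltrP b (node k + p).
  by apply: Or31; apply: (meets_k (node k + p)); lra.
have [bhi|bhi] := ltrP (node k + al - p) (b + 1).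
  by apply: Or32; apply: (meets_k1 (node k + al - p)); lra.
by apply: Or33.
Qed.

Lemma meets_or_in_gap (al_gt0 : 0 < al) (p_ge0 : 0 <= p) (L : int) (b : R) :
  0 <= L -> - node L - 1 < b < node L ->
  (exists2 k : int, `|k| <= L & meets b k) \/
  (exists2 k : int, - L <= k <= L - 1 & in_gap b k).
Proof.
move=> L0 bL.
have [y [yb yL]] : exists y, b < y < b + 1 /\ - node L <= y <= node L.
  by apply: window_meets_interval => //; have := node_ge0 al_gt0 L0; lra.
have [k kL /andP[yk1 yk2]] := node_floor al_gt0 yL.
have [kE|kL'] := eqVneq k L.
  left; exists L; first by rewrite ger0_norm.
  by exists y; rewrite -kE; split=> //; move: yL; rewrite -kE; lra.
have kL1 : - L <= k <= L - 1 by lia.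
have /(window_cell p_ge0 yb) : node k <= y <= node k + al by lra.
case=> [m|m|g]; [left; exists k | left; exists (k + 1) | right; exists k] => //; lia.
Qed.

Definition nondom (b : R) (L : int) : Prop :=
  - node L - 1 < b < node L /\ exists! k : int, `|k| <= L /\ meets b k.

Definition dom_with (b : R) (L k : int) : Prop :=
  [\/ (- L <= k <= L - 1) /\ in_gap b k,
      node L <= b /\ k = L
    | b + 1 <= - node L /\ k = - L - 1].

Lemma nondom_or_dom (al_gt0 : 0 < al) (p_ge0 : 0 <= p) (gap_wide : 1 <= al - 2 * p)
    (b : R) (L : int) :
  0 <= L -> nondom b L \/ exists k, dom_with b L k.
Proof.
move=> L0; have [bL|bL] := lerP (node L) b; first by right; exists L; apply: Or32.
have [bL'|bL'] := lerP (b + 1) (- node L).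
  by right; exists (- L - 1); apply: Or33.
have : - node L - 1 < b < node L by lra.
case/(meets_or_in_gap al_gt0 p_ge0 L0) => [[k kL mk]|[k kL gk]].
- left; split; first by lra.
  by exists k; split=> // j [_ mj]; apply: meets_unique mk mj.
- by right; exists k; apply: Or31.
Qed.

Lemma in_gap_inside (al_gt0 : 0 < al) (b : R) (L k : int) :
  - L <= k <= L - 1 -> in_gap b k -> - node L + p <= b /\ b + 1 <= node L - p.
Proof.
move=> /andP[kL1 kL2] [gk1 gk2].
have := node_le al_gt0 kL1; rewrite nodeN => lo.
have /(node_lt al_gt0) hi : k < L by lia.
by split; lra.
Qed.

Lemma dom_with_unique (al_gt0 : 0 < al) (p_ge0 : 0 <= p) (b : R) (L j k : int) :
  0 <= L -> dom_with b L j -> dom_with b L k -> j = k.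
Proof.
move=> L0; have nL0 := node_ge0 al_gt0 L0.
case=> [[jL /[dup] gj /(in_gap_inside al_gt0 jL) [jlo jhi]]|[bj ->]|[bj ->]];
case=> [[kL /[dup] gk /(in_gap_inside al_gt0 kL) [klo khi]]|[bk ->]|[bk ->]] //;
  first exact: in_gap_unique gj gk.
all: by exfalso; lra.
Qed.

Lemma dom_with_not_nondom (al_gt0 : 0 < al) (b : R) (L k : int) :
  dom_with b L k -> ~ nondom b L.
Proof.
case=> [[_ gk] [_ [j [[_ mj] _]]]|[bL _] [/andP[_ bL']]|[bL _] [/andP[bL' _]]].
- exact: in_gap_not_meets gk mj.
- by lra.
- by lra.
Qed.

Theorem nondom_xor_dom (al_gt0 : 0 < al) (p_ge0 : 0 <= p) (gap_wide : 1 <= al - 2 * p)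
    (b : R) (L : int) :
  0 <= L ->
  (nondom b L /\ ~ exists! k, dom_with b L k) \/
  (~ nondom b L /\ exists! k, dom_with b L k).
Proof.
move=> L0; have [nd|[k dk]] := nondom_or_dom al_gt0 p_ge0 gap_wide b L0.
  by left; split=> // -[k [dk _]]; apply: dom_with_not_nondom dk nd.
right; split; first exact: dom_with_not_nondom dk.
by exists k; split=> // j; apply: dom_with_unique.
Qed.

Lemma dom_with_sound (al_gt0 : 0 < al) (b s t : R) (L k : int) :
  dom_with b L k -> `|s| <= L%:~R -> `|t| <= node L -> `|t - al * s| <= p ->
  (s <= k%:~R -> t <= b) /\ (k%:~R + 1 <= s -> b + 1 <= t).
Proof.
move=> dk; rewrite !ler_norml => /andP[sL1 sL2] /andP[tL1 tL2] /andP[ts1 ts2].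
have node_ge (z : int) : s <= z%:~R -> al * s <= node z.
  by move=> zs; rewrite ler_wpM2l // ltW.
have node_le_s (z : int) : z%:~R <= s -> node z <= al * s.
  by move=> zs; rewrite ler_wpM2l // ltW.
case: dk => [[_ [gk1 gk2]]|[bL ->]|[bL ->]]; split=> hs.
- by have := node_ge _ hs; lra.
- by have := node_le_s (k + 1); rewrite node_add1 intrD => /(_ hs); lra.
- by lra.
- by move: hs sL2; lra.
- by move: hs sL1; rewrite intrB intrN; lra.
- by lra.
Qed.

End Lattice.

Lemma infnorm_ge (T : realDomainType) (n : nat) (v : 'I_n -> T) (i : 'I_n) :
  `|v i| <= infnorm v.
Proof. exact: le_bigmax. Qed.

Lemma infnorm_ge0 (T : realDomainType) (n : nat) (v : 'I_n -> T) : 0 <= infnorm v.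
Proof. exact: bigmax_ge_id. Qed.

Lemma infnorm_gt0 (T : realDomainType) (n : nat) (v : 'I_n -> T) :
  v <> (fun _ => 0) -> 0 < infnorm v.
Proof.
move=> v0; have [i vi0] : exists i, v i != 0.
  apply/existsP; apply: contra_notT v0 => /existsPn v0.
  by apply: functional_extensionality => i; apply/eqP/negPn/v0.
by apply: lt_le_trans (infnorm_ge v i); rewrite normr_gt0.
Qed.

Lemma dotv_le (R : realType) (n : nat) (c x : 'I_n -> R) (M : R) :
  (forall i, `|c i| <= M) -> `|dotv c x| <= M * onenorm x.
Proof.
move=> cM; rewrite /dotv /onenorm mulr_sumr.
apply: le_trans (ler_norm_sum _ _ _) _; apply: ler_sum => i _.
by rewrite normrM ler_wpM2r.
Qed.

Lemma dotv_bound (R : realType) (n : nat) (c x : 'I_n -> R) (r : nat) :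
  onenorm x <= r%:R -> `|dotv c x| <= r%:R * infnorm c.
Proof.
move=> xr; apply: le_trans (dotv_le x (infnorm_ge c)) _.
by rewrite mulrC; apply: ler_wpM2r; [exact: infnorm_ge0 | exact: xr].
Qed.

Lemma dotv_int_bound (R : realType) (n : nat) (v : 'I_n -> int) (x : 'I_n -> R) (r : nat) :
  onenorm x <= r%:R -> `|dotv (intvec R v) x| <= (r%:Z * infnorm v)%:~R.
Proof.
move=> xr; apply: le_trans (dotv_le x (M := (infnorm v)%:~R) _) _.
  by move=> i; rewrite /intvec -intr_norm ler_int infnorm_ge.
rewrite intrM [X in _ <= X]mulrC.
by apply: ler_wpM2l; [rewrite ler0z infnorm_ge0 | exact: xr].
Qed.

Section Diophantine.
Variables (R : realType) (n : nat) (a : 'I_n -> R) (N : nat) (a' : 'I_n -> int).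
Hypotheses (a_neq0 : a <> (fun _ => 0)) (a'_approx : dioph_approx a N a').

Lemma infnorm_approx_gt0 : 0 < (infnorm a')%:~R :> R.
Proof. by case: a'_approx => _ [l [/andP[l1 _] _ _ ->]]; rewrite ltr0n. Qed.

Lemma alpha_gt0 : 0 < alpha a a'.
Proof. by rewrite divr_gt0 ?infnorm_gt0 ?infnorm_approx_gt0. Qed.

Lemma infnorm_alpha : infnorm a = alpha a a' * (infnorm a')%:~R.
Proof. by rewrite /alpha divfK // gt_eqF // infnorm_approx_gt0. Qed.

Lemma approx_coord_error (i : 'I_n) :
  `|a i - alpha a a' * (a' i)%:~R| <= alpha a a' / N%:R.
Proof.
have A0 := infnorm_gt0 a_neq0; have al0 := alpha_gt0.
case: a'_approx => _ [l [/andP[l1 _] _ err la']].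
set e := fun i => l%:R * a i / infnorm a - (a' i)%:~R.
have ei : `|e i| <= N%:R^-1 by apply/ltW/(le_lt_trans (infnorm_ge e i)).
have -> : a i - alpha a a' * (a' i)%:~R = alpha a a' * e i.
  rewrite /e /alpha la' -[(l%:Z)%:~R]/(l%:R : R); field.
  by rewrite !gt_eqF // ltr0n.
by rewrite normrM gtr0_norm // ler_wpM2l // ltW.
Qed.

Lemma approx_dot_error (r : nat) (x : 'I_n -> R) :
  onenorm x <= r%:R ->
  `|dotv a x - alpha a a' * dotv (intvec R a') x| <= alpha a a' * (r%:R / N%:R).
Proof.
move=> xr; have al0 := alpha_gt0.
have -> : dotv a x - alpha a a' * dotv (intvec R a') x =
          dotv (fun i => a i - alpha a a' * (a' i)%:~R) x.
  by rewrite /dotv /intvec mulr_sumr -sumrB; apply: eq_bigr => i _; ring.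
apply: le_trans (dotv_le x approx_coord_error) _.
rewrite -mulrA; apply: ler_wpM2l; first exact: ltW.
by rewrite [_ / _]mulrC; apply: ler_wpM2l; rewrite ?invr_ge0.
Qed.

Lemma range_node (r : nat) :
  r%:R * infnorm a = node (alpha a a') (r%:Z * infnorm a').
Proof. by rewrite /node intrM infnorm_alpha mulrCA. Qed.

Lemma nondominatingE (b : R) (r : nat) :
  nondominating a a' b r N <->
  nondom (alpha a a') (alpha a a' * (r%:R / N%:R)) b (r%:Z * infnorm a').
Proof.
rewrite /nondominating /nondom -range_node mulNr; apply: and_iff_compat_l.
by apply: unique_iff => k; rewrite /meets /node mulrBr mulrDr.
Qed.

Lemma dominating_withE (b : R) (r : nat) (k : int) :
  dominating_with a a' b r N k <->
  dom_with (alpha a a') (alpha a a' * (r%:R / N%:R)) b (r%:Z * infnorm a') k.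
Proof.
have gapE : (forall y, b < y < b + 1 -> alpha a a' * (k%:~R + r%:R / N%:R) < y <
                 alpha a a' * (k%:~R + 1 - r%:R / N%:R)) <->
            in_gap (alpha a a') (alpha a a' * (r%:R / N%:R)) b k.
  by rewrite mulrBr !mulrDr mulr1; apply: window_inside.
rewrite /dominating_with /dom_with -range_node.
split; case=> [[kL /gapE gk]|bk|bk]; by [apply: Or31 | apply: Or32 | apply: Or33].
Qed.

End Diophantine.

Unset Implicit Arguments. Set Strict Implicit.

Theorem lemma3p1 (R : realType) (n : nat) (a : 'I_n -> R) (b : R)
    (r N : nat) (a' : 'I_n -> int) :
  a <> (fun _ => 0) ->
  dioph_approx a N a' ->
  (* (i) *)
  (forall b' : R,
     implies_R r (fun x => dotv (intvec R a') x <= b')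
                 (fun x => dotv a x <= alpha a a' * (b' + r%:R / N%:R)) /\
     implies_R r (fun x => dotv (intvec R a') x >= b')
                 (fun x => dotv a x >= alpha a a' * (b' - r%:R / N%:R))) /\
  (* (ii) *)
  (r%:R / N%:R < 4^-1 :> R -> 2 <= alpha a a' ->
     ((nondominating a a' b r N /\ ~ dominating a a' b r N) \/
      (~ nondominating a a' b r N /\ dominating a a' b r N)) /\
     (forall b' : int, dominating_with a a' b r N b' ->
        implies_R r (fun x => dotv (intvec R a') x <= b'%:~R)
                    (fun x => dotv a x <= b) /\
        implies_R r (fun x => dotv (intvec R a') x >= b'%:~R + 1)
                    (fun x => dotv a x >= b + 1))).
Proof.
move=> a_neq0 a'_approx.
have al0 := alpha_gt0 a_neq0 a'_approx.
have err := approx_dot_error a_neq0 a'_approx.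
split.
  move=> b'; split=> x /err /[swap] xb; rewrite ler_norml => /andP[lo hi];
    have := ler_wpM2l (ltW al0) xb; lra.
move=> small al_ge2.
(* r / N < 1/4 and alpha >= 2 make consecutive intervals a unit apart. *)
have p_ge0 : 0 <= alpha a a' * (r%:R / N%:R).
  by apply: mulr_ge0; [exact: ltW | apply: divr_ge0].
have gap_wide : 1 <= alpha a a' - 2 * (alpha a a' * (r%:R / N%:R)).
  have : alpha a a' * (r%:R / N%:R) <= alpha a a' * 4^-1.
    by apply: ler_wpM2l; rewrite ?ltW.
  lra.
have L_ge0 : 0 <= r%:Z * infnorm a'.
  by have := infnorm_approx_gt0 a'_approx; rewrite ltr0z => /ltW; apply: mulr_ge0.
split.
  have := nondom_xor_dom al0 p_ge0 gap_wide b L_ge0.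
  have := nondominatingE a'_approx b r.
  have := unique_iff (dominating_withE a'_approx b r).
  rewrite /dominating; tauto.
move=> k /(dominating_withE a'_approx) dk.
have sound x : onenorm x <= r%:R ->
    (dotv (intvec R a') x <= k%:~R -> dotv a x <= b) /\
    (k%:~R + 1 <= dotv (intvec R a') x -> b + 1 <= dotv a x).
  move=> xr; apply: (dom_with_sound al0 dk (dotv_int_bound a' xr) _ (err _ _ xr)).
  by rewrite -(range_node a'_approx); apply: dotv_bound.
by split=> x xr; case: (sound x xr).
Qed.
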